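(* Let $G$ be a connected graph of order $n\ge 3$. Then $\Gamma_{\rm cer}(G)=n-2$ if and only if $G$ is a simple diadem, a diadem, or one of the graphs $K_2+\overline{K}_{n-2}$ and $\overline{K}_2+\overline{K}_{n-2}$.
   Context: All graphs are finite and simple. A set $D\subseteq V_G$ is a dominating set of $G$ if every vertex of $V_G-D$ has a neighbor in $D$. A set $D$ is a certified dominating set of $G$ if $D$ is dominating and every vertex of $D$ has either zero or at least two neighbors in $V_G-D$; it is minimal if no proper subset is a certified dominating set. $\Gamma_{\rm cer}(G)$ is the maximum cardinality of a minimal certified dominating set. A graph is a corona if it equals $H\circ K_1$ for some graph $H$ (attach one new pendant vertex to each vertex of $H$); in a corona, a leaf is a vertex of degree one and a support is a vertex adjacent to a leaf. A simple diadem is a graph obtained from a corona by adding one new vertex and joining it to exactly one support of the corona. A diadem is a graph obtained from a corona by adding one new vertex and joining it to exactly one leaf and to the neighbor of that leaf. $F+H$ denotes the join of $F$ and $H$ (disjoint union plus all edges between them), and $\overline{K}_m$ is the edgeless graph on $m$ vertices. *)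

From mathcomp Require Import all_boot.
Set Implicit Arguments. Unset Strict Implicit. Unset Printing Implicit Defensive.

Section Cer.
Variables (T : finType) (g : rel T).

Definition dominating (D : {set T}) : bool :=
  [forall v, (v \notin D) ==> [exists u in D, g v u]].

Definition ext_nbrs (D : {set T}) (v : T) : {set T} := [set u | g v u & u \notin D].

Definition certified_dominating (D : {set T}) : bool :=
  dominating D && [forall v in D, #|ext_nbrs D v| != 1].

Definition minimal_certified_dominating (D : {set T}) : bool :=
  certified_dominating D &&
  [forall D' : {set T}, (D' \proper D) ==> ~~ certified_dominating D'].

(* upper certified domination number: max cardinality of a minimal certified dominating set
   (the family is nonempty since V_G itself is certified dominating) *)
Definition Gamma_cer : nat :=
  \max_(D : {set T} | minimal_certified_dominating D) #|D|.
End Cer.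

Definition simple_graph (T : finType) (g : rel T) := symmetric g /\ irreflexive g.
Definition connected_graph (T : finType) (g : rel T) := forall x y, connect g x y.

Definition isomorphic (T1 T2 : finType) (g1 : rel T1) (g2 : rel T2) : Prop :=
  exists f : T1 -> T2, bijective f /\ forall x y, g1 x y = g2 (f x) (f y).

(* corona H o K1 of H on 'I_k: inl a = vertex a of H, inr a = pendant leaf attached to a *)
Definition corona (k : nat) (h : rel 'I_k) : rel ('I_k + 'I_k) :=
  fun x y => match x, y with
  | inl a, inl b => h a b
  | inl a, inr b => a == b
  | inr a, inl b => a == b
  | inr _, inr _ => false
  end.

(* simple diadem: new vertex None joined to the support inl s *)
Definition simple_diadem_rel (k : nat) (h : rel 'I_k) (s : 'I_k) :
  rel (option ('I_k + 'I_k)) :=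
  fun x y => match x, y with
  | None, None => false
  | None, Some (inl a) | Some (inl a), None => a == s
  | None, Some (inr _) | Some (inr _), None => false
  | Some u, Some v => corona h u v
  end.

(* diadem: new vertex None joined to the leaf inr s and to its neighbour inl s *)
Definition diadem_rel (k : nat) (h : rel 'I_k) (s : 'I_k) :
  rel (option ('I_k + 'I_k)) :=
  fun x y => match x, y with
  | None, None => false
  | None, Some (inl a) | Some (inl a), None => a == s
  | None, Some (inr a) | Some (inr a), None => a == s
  | Some u, Some v => corona h u v
  end.

Definition is_simple_diadem (T : finType) (g : rel T) : Prop :=
  exists k (h : rel 'I_k) (s : 'I_k),
    simple_graph h /\ isomorphic g (simple_diadem_rel h s).

Definition is_diadem (T : finType) (g : rel T) : Prop :=
  exists k (h : rel 'I_k) (s : 'I_k),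
    simple_graph h /\ isomorphic g (diadem_rel h s).

(* K_2 + \overline{K}_m : inl side is K_2 (on bool), inr side is edgeless on 'I_m *)
Definition K2_join_barK (m : nat) : rel (bool + 'I_m) :=
  fun x y => match x, y with
  | inl a, inl b => a != b
  | inl _, inr _ | inr _, inl _ => true
  | inr _, inr _ => false
  end.

Definition barK2_join_barK (m : nat) : rel (bool + 'I_m) :=
  fun x y => match x, y with
  | inl _, inl _ => false
  | inl _, inr _ | inr _, inl _ => true
  | inr _, inr _ => false
  end.

From mathcomp Require Import all_boot zify.
Set Implicit Arguments. Unset Strict Implicit. Unset Printing Implicit Defensive.

(* A certified dominating set missing exactly one vertex does not exist, and
   V_G is not minimal once some D = V_G - {x, y} is certified; so
   Gamma_cer(G) = n - 2 means exactly that such a D is a minimal certified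
   dominating set.  Certification forces every vertex of D to see both of x, y
   or neither, and minimality forbids deleting any nonempty X from D when D - X
   stays certified.  Deleting well-chosen sets X shows that the vertices of D
   missing x are leaves and their (private, non-leaf) supports, that the
   remaining vertices of D are independent, and that if some vertex misses x
   then exactly one vertex s of D sees x.  In that case G is the corona of
   G[D - leaves] with y as the pendant vertex of s and x joined to s (and to y
   if xy is an edge): a simple diadem or a diadem.  Otherwise D is independent
   and completely joined to {x, y}.  Conversely, in each listed graph the
   complement of the apex and the pendant of s (resp. of the two-vertex side)
   is a minimal certified dominating set. *)

Lemma card_ne1P (T : finType) (A : {set T}) :
  reflect (forall u, u \in A -> exists2 w, w \in A & w != u) (#|A| != 1).
Proof.
apply: (iffP idP) => [A_ne1 u uA | A_ne1].
  apply/exists_inP; rewrite -negb_forall_in; apply: contra A_ne1 => /forall_inP Au.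
  apply/cards1P; exists u; apply/setP => z; rewrite inE.
  by apply/idP/eqP => [zA | ->//]; move: (Au z zA); case: eqP.
apply/negP => /cards1P [u Au].
have := A_ne1 u; rewrite Au set11 => /(_ isT) [w].
by rewrite !inE => /eqP ->; rewrite eqxx.
Qed.

Definition mcd_compl_pair (T : finType) (g : rel T) : Prop :=
  exists x y, x != y /\ minimal_certified_dominating g (~: [set x; y]).

Section UpperCertifiedDomination.
Variables (T : finType) (g : rel T).
Hypothesis gsym : symmetric g.

Lemma certified_compl_gt1 (D : {set T}) v :
  certified_dominating g D -> v \notin D -> 1 < #|~: D|.
Proof.
case/andP => /forallP /(_ v) /implyP Ddom /forall_inP Dext vD.
have [u uD gvu] := exists_inP (Ddom vD).
have vu : v \in ext_nbrs g D u by rewrite !inE gsym gvu.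
have [w wu wv] := card_ne1P _ (Dext u uD) v vu.
apply/card_gt1P; exists v, w; move: wu; rewrite !inE => /andP [_ ->].
by rewrite vD eq_sym wv.
Qed.

Lemma Gamma_cer_subn2P :
  3 <= #|T| -> Gamma_cer g = #|T| - 2 <-> mcd_compl_pair g.
Proof.
move=> n3; split => [GammaE | [x [y [xy Dmin]]]].
  have [D0 D0min | no_mcd] := pickP (minimal_certified_dominating g); last first.
    by move: GammaE; rewrite /Gamma_cer big_pred0 //; lia.
  have mcd_gt0 : 0 < #|[pred D | minimal_certified_dominating g D]|.
    by apply/card_gt0P; exists D0.
  have [D1 D1min] := @eq_bigmax_cond _ [pred D | minimal_certified_dominating g D]
    (fun D => #|D|) mcd_gt0.
  rewrite -[LHS]/(Gamma_cer g) GammaE.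
  move=> D1E; have : #|~: D1| == 2 by move: (cardsC D1); rewrite -D1E; lia.
  by case/cards2P => a [b [ab D1c]]; exists a, b; rewrite -D1c setCK.
have cardD : #|~: [set x; y]| = #|T| - 2.
  by move: (cardsC [set x; y]); rewrite cards2 xy; lia.
apply/eqP; rewrite eqn_leq -{2}cardD (leq_bigmax_cond _ Dmin) andbT.
apply/bigmax_leqP => D /andP [Dcert /forallP Dmin'].
have [v vD | Dfull] := pickP (fun v => v \notin D).
  by move: (certified_compl_gt1 Dcert vD) (cardsC D); lia.
have DT : D = setT by apply/setP => v; move: (Dfull v); rewrite inE => /negbFE.
have : ~:[set x; y] \proper D.
  by rewrite DT properT; apply/eqP => /setP /(_ x); rewrite !inE eqxx.
by move/(implyP (Dmin' _)); rewrite (andP Dmin).1.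
Qed.

End UpperCertifiedDomination.

Section Preimage.
Variables (T1 T2 : finType) (g1 : rel T1) (g2 : rel T2) (f : T1 -> T2) (f' : T2 -> T1).
Hypotheses (f'K : cancel f' f) (gf : forall u v, g1 u v = g2 (f u) (f v)).

Lemma certified_dominating_preim (A : {set T2}) :
  certified_dominating g2 A -> certified_dominating g1 (f @^-1: A).
Proof.
case/andP => /forallP Adom /forall_inP Aext; apply/andP; split.
  apply/forallP => v; apply/implyP; rewrite inE => vA.
  have [z zA gz] := exists_inP (implyP (Adom (f v)) vA).
  by apply/exists_inP; exists (f' z); [rewrite inE f'K | rewrite gf f'K].
apply/forall_inP => v; rewrite inE => vA.
apply/card_ne1P => u; rewrite !inE => /andP [gvu uA].
have fu : f u \in ext_nbrs g2 A (f v) by rewrite !inE -gf gvu uA.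
have [w wE wu] := card_ne1P _ (Aext _ vA) _ fu.
exists (f' w); first by move: wE; rewrite !inE gf f'K.
by apply: contra wu => /eqP <-; rewrite f'K.
Qed.

End Preimage.

Lemma minimal_certified_dominating_preim (T1 T2 : finType) (g1 : rel T1) (g2 : rel T2)
    (f : T1 -> T2) (A : {set T2}) :
  bijective f -> (forall u v, g1 u v = g2 (f u) (f v)) ->
  minimal_certified_dominating g2 A -> minimal_certified_dominating g1 (f @^-1: A).
Proof.
case=> f' fK f'K gf /andP [Acert /forallP Amin].
rewrite /minimal_certified_dominating (certified_dominating_preim f'K gf Acert).
apply/forallP => B; apply/implyP => BA; apply/negP => Bcert.
have gf' u v : g2 u v = g1 (f' u) (f' v) by rewrite gf !f'K.
move: (Amin (f' @^-1: B)); rewrite (certified_dominating_preim fK gf' Bcert) implybF.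
move/negP; apply.
move: BA; rewrite !properE => /andP [/subsetP BA AB].
apply/andP; split.
  by apply/subsetP => w; rewrite inE => /BA; rewrite inE f'K.
apply: contra AB => /subsetP AB; apply/subsetP => v; rewrite inE => vA.
by have := AB (f v) vA; rewrite inE fK.
Qed.

Lemma mcd_compl_pair_iso (T1 T2 : finType) (g1 : rel T1) (g2 : rel T2) :
  isomorphic g1 g2 -> mcd_compl_pair g2 -> mcd_compl_pair g1.
Proof.
case=> f [fbij gf] [x [y [xy Dmin]]]; have [f' fK f'K] := fbij.
exists (f' x), (f' y); split; first by apply: contra xy => /eqP /(can_inj f'K) ->.
suff -> : ~: [set f' x; f' y] = f @^-1: ~: [set x; y].
  exact: minimal_certified_dominating_preim.
by apply/setP => v; rewrite !inE -!(can2_eq fK f'K).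
Qed.

Lemma isomorphic_of_onto (T1 T2 : finType) (g1 : rel T1) (g2 : rel T2) (e : T2 -> T1) :
  injective e -> (forall v, v \in codom e) ->
  (forall a b, g1 (e a) (e b) = g2 a b) -> isomorphic g1 g2.
Proof.
move=> einj eonto ge.
have card12 : #|T1| <= #|T2|.
  by rewrite -(card_codom einj); apply/subset_leq_card/subsetP => v _; apply: eonto.
have [f eK fK] := inj_card_bij einj card12.
exists f; split; first by exists e.
by move=> u v; rewrite -ge !fK.
Qed.

Definition join_shape m (c : bool) (R : rel (bool + 'I_m)) : Prop :=
  [/\ forall a b, R (inl a) (inl b) = c && (a != b),
      forall a i, R (inl a) (inr i),
      forall a i, R (inr i) (inl a) &
      forall i j, R (inr i) (inr j) = false].

Lemma K2_join_shape m : join_shape true (@K2_join_barK m). Proof. by []. Qed.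

Lemma barK2_join_shape m : join_shape false (@barK2_join_barK m). Proof. by []. Qed.

Lemma join_mcd_compl_pair m c (R : rel (bool + 'I_m)) :
  0 < m -> join_shape c R -> mcd_compl_pair R.
Proof.
move=> m_gt0 [_ Rlr Rrl Rrr]; exists (inl true), (inl false); split => //.
have inD (v : bool + 'I_m) :
    (v \in ~: [set inl true; inl false]) = if v is inr _ then true else false.
  by case: v => [[]|i]; rewrite !inE.
rewrite /minimal_certified_dominating /certified_dominating -andbA; apply/and3P; split.
- apply/forallP => v; apply/implyP; rewrite inD; case: v => // a _.
  by apply/exists_inP; exists (inr (Ordinal m_gt0)); rewrite ?inD ?Rlr.
- apply/forall_inP => v; rewrite inD; case: v => // i _.
  apply/card_ne1P => [[a|j]]; last by rewrite !inE Rrr.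
  by rewrite !inE => _; exists (inl (~~ a)); rewrite ?inE ?Rrl; case: a.
apply/forallP => B; apply/implyP => BD; apply/negP => /andP [/forallP Bdom _].
move: BD; rewrite properE => /andP [/subsetP BD /subsetPn [v vD vB]].
have [u uB Rvu] := exists_inP (implyP (Bdom v) vB).
move: (BD u uB) vD Rvu; rewrite !inD; clear vB uB.
by case: v => // i; case: u => // j; rewrite Rrr.
Qed.

(* [b] records whether the apex [None] also sees the pendant vertex [inr s]:
   a diadem if so, a simple diadem otherwise. *)
Record diadem_shape k (h : rel 'I_k) (s : 'I_k) (b : bool)
    (R : rel (option ('I_k + 'I_k))) : Prop := DiademShape {
  diadem_corona : forall u v, R (Some u) (Some v) = corona h u v;
  diadem_apex : R None None = false;
  diadem_apex_inl : forall a, R None (Some (inl a)) = (a == s);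
  diadem_inl_apex : forall a, R (Some (inl a)) None = (a == s);
  diadem_apex_inr : forall a, R None (Some (inr a)) = b && (a == s);
  diadem_inr_apex : forall a, R (Some (inr a)) None = b && (a == s) }.

Lemma simple_diadem_shape k (h : rel 'I_k) s : diadem_shape h s false (simple_diadem_rel h s).
Proof. by split => // [[]]. Qed.

Lemma diadem_diadem_shape k (h : rel 'I_k) s : diadem_shape h s true (diadem_rel h s).
Proof. by split => // [[]]. Qed.

Section DiademModel.
Variables (k : nat) (h : rel 'I_k) (s : 'I_k) (b : bool) (R : rel (option ('I_k + 'I_k))).
Hypothesis Rshape : diadem_shape h s b R.

Local Notation V := (option ('I_k + 'I_k)).
Local Notation D := (~: [set None; Some (inr s)] : {set V}).

Let inD (v : V) : (v \in D) = (v != None) && (v != Some (inr s)).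
Proof. by rewrite !inE negb_or. Qed.

Let inl_in_D a : Some (inl a) \in D. Proof. by rewrite inD. Qed.

Let inr_in_D a : (Some (inr a) \in D) = (a != s).
Proof. by rewrite inD /=; congr (~~ _); apply/eqP/eqP => [[]|->]. Qed.

Let notin_D (v : V) : v \notin D -> v = None \/ v = Some (inr s).
Proof. by rewrite inD negb_and !negbK => /orP [] /eqP ->; [left | right]. Qed.

Let pendant_nbr a (u : V) : a != s -> R (Some (inr a)) u -> u = Some (inl a).
Proof.
move=> a_s; case: u => [[c|c]|]; rewrite ?(diadem_corona Rshape) ?(diadem_inr_apex Rshape) //=.
  by move/eqP => ->.
by rewrite (negbTE a_s) andbF.
Qed.

Lemma diadem_shape_certified : certified_dominating R D.
Proof.
apply/andP; split.
  apply/forallP => v; apply/implyP => /notin_D [] ->; apply/exists_inP;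
  by exists (Some (inl s)); rewrite ?(diadem_apex_inl Rshape) ?(diadem_corona Rshape) /=.
apply/forall_inP => -[[a|a]|] //; last by rewrite inD.
  move=> _; apply/card_ne1P => u; rewrite in_set => /andP [Ru /notin_D uD].
  have -> : a = s.
    by case: uD Ru => ->; rewrite ?(diadem_inl_apex Rshape) ?(diadem_corona Rshape) => /eqP.
  exists (if u == None then Some (inr s) else None); last by case: uD => ->.
  by case: eqP => _; rewrite !inE ?(diadem_inl_apex Rshape) ?(diadem_corona Rshape) /= ?eqxx.
rewrite inr_in_D => a_s; apply/card_ne1P => u; rewrite in_set => /andP [Ru].
by rewrite (pendant_nbr a_s Ru) inl_in_D.
Qed.

Let supports_in_certified (B : {set V}) a :
  B \subset D -> certified_dominating R B -> Some (inl a) \in B.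
Proof.
move=> /subsetP BD /andP [/forallP Bdom /forall_inP Bext]; apply/negPn/negP => aB.
case: (eqVneq a s) aB => [-> | a_s] aB.
  have NB : None \notin B by apply/negP => /BD; rewrite inD.
  have [[[c|c]|] uB] := exists_inP (implyP (Bdom None) NB).
  - by rewrite (diadem_apex_inl Rshape) => /eqP ec; move: uB; rewrite ec (negbTE aB).
  - rewrite (diadem_apex_inr Rshape) => /andP [_ /eqP ec].
    by move: (BD _ uB); rewrite ec inr_in_D eqxx.
  - by move: (BD _ uB); rewrite inD.
have [pB | pB] := boolP (Some (inr a) \in B).
  have aE : Some (inl a) \in ext_nbrs R B (Some (inr a)).
    by rewrite !inE aB (diadem_corona Rshape) /= eqxx.
  have [u] := card_ne1P _ (Bext _ pB) _ aE.
  by rewrite in_set => /andP [/(pendant_nbr a_s) ->]; rewrite eqxx.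
have [u uB /(pendant_nbr a_s) ua] := exists_inP (implyP (Bdom _) pB).
by move: uB; rewrite ua (negbTE aB).
Qed.

Lemma diadem_shape_mcd : minimal_certified_dominating R D.
Proof.
rewrite /minimal_certified_dominating diadem_shape_certified /=.
apply/forallP => B; apply/implyP => BD; apply/negP => Bcert.
move: BD; rewrite properE => /andP [BD /subsetPn [[[a|a]|] vD vB]].
- by rewrite supports_in_certified in vB.
- have a_s : a != s by rewrite inr_in_D in vD.
  have /andP [/forallP Bdom /forall_inP Bext] := Bcert.
  have [u uB /(pendant_nbr a_s) ua] := exists_inP (implyP (Bdom _) vB).
  rewrite {u}ua in uB.
  have aE : Some (inr a) \in ext_nbrs R B (Some (inl a)).
    by rewrite !inE vB (diadem_corona Rshape) /= eqxx.
  have [[[c|c]|]] := card_ne1P _ (Bext _ uB) _ aE; rewrite in_set.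
  + by rewrite (supports_in_certified _ BD Bcert) andbF.
  + by rewrite (diadem_corona Rshape) /= => /andP [/eqP ->]; rewrite eqxx.
  + by rewrite (diadem_inl_apex Rshape) (negbTE a_s).
- by rewrite inD in vD.
Qed.

End DiademModel.

Lemma diadem_mcd_compl_pair k (h : rel 'I_k) s b R :
  diadem_shape h s b R -> mcd_compl_pair R.
Proof.
by move=> Rshape; exists None, (Some (inr s)); split; last exact: diadem_shape_mcd Rshape.
Qed.

Section ComplementOfPair.
Variables (T : finType) (g : rel T).
Hypotheses (gsym : symmetric g) (girr : irreflexive g) (gconn : connected_graph g).
Hypothesis n3 : 3 <= #|T|.
Variables x y : T.
Hypothesis xy : x != y.
Local Notation D := (~: [set x; y]).
Hypothesis Dmin : minimal_certified_dominating g D.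
Implicit Types u v w l p a b s : T.

Lemma inD v : (v \in D) = (v != x) && (v != y).
Proof. by rewrite !inE negb_or. Qed.

Let Dcert : certified_dominating g D. Proof. exact: (andP Dmin).1. Qed.

Lemma adj_x_adj_y v : v \in D -> g v x = g v y.
Proof.
move=> vD; have /forall_inP /(_ v vD) := (andP Dcert).2.
move: vD; rewrite inD => /andP [vx vy].
have -> : ext_nbrs g D v = [set z in [set x; y] | g v z].
  by apply/setP => z; rewrite !inE negbK andbC.
case gx: (g v x); case gy: (g v y) => //.
  suff -> : [set z in [set x; y] | g v z] = [set x] by rewrite cards1.
  apply/setP => z; rewrite !inE; case: eqP => [->|_]; rewrite ?gx //.
  by case: eqP => [->|]; rewrite ?gy.
suff -> : [set z in [set x; y] | g v z] = [set y] by rewrite cards1.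
apply/setP => z; rewrite !inE; case: (eqVneq z y) => [->|_]; rewrite ?gy ?orbT //.
by case: eqP => [->|]; rewrite ?gx.
Qed.

Lemma x_nbr_in_D : exists2 u, u \in D & g u x.
Proof.
have /forallP /(_ x) := (andP Dcert).1; rewrite inD eqxx /= => /exists_inP [u uD gxu].
by exists u; rewrite // gsym.
Qed.

(* A vertex of D adjacent to x also sees y, so it keeps two external
   neighbours; only vertices missing x need the last hypothesis. *)
Lemma certified_setD (X : {set T}) :
  (exists2 s, s \in D :\: X & g s x) ->
  {in X, forall v, exists2 u, u \in D :\: X & g v u} ->
  (forall w, w \in D :\: X -> ~~ g w x -> forall u, u \in X -> g w u ->
     exists2 u', u' \in X & (u' != u) && g w u') ->
  certified_dominating g (D :\: X).
Proof.
move=> [s sDX sx] Xdom Xext; have sD : s \in D by move: sDX; rewrite in_setD => /andP [].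
apply/andP; split.
  apply/forallP => w; apply/implyP; rewrite in_setD negb_and negbK => /orP [wX | wD].
    by have [u uDX gwu] := Xdom w wX; apply/exists_inP; exists u.
  apply/exists_inP; exists s => //.
  by move: wD; rewrite inD negb_and !negbK => /orP [] /eqP ->; rewrite gsym -?adj_x_adj_y.
apply/forall_inP => w wDX; have wD : w \in D by move: wDX; rewrite in_setD => /andP [].
case gwx: (g w x).
  apply/card_ne1P => u _; exists (if u == x then y else x); last first.
    by case: (eqVneq u x) => [->|ux]; rewrite ?eqxx ?(negbTE ux) // eq_sym.
  have gwy : g w y by rewrite -adj_x_adj_y.
  by case: eqP => _; rewrite !inE ?gwx ?gwy ?eqxx ?orbT ?andbF.
apply/card_ne1P => u; rewrite in_set in_setD negb_and negbK => /andP [gwu].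
have uD : u \in D.
  rewrite inD; apply/andP; split; first by apply: contraFneq gwx => <-.
  by apply: contraFneq gwx => uy; rewrite adj_x_adj_y // -uy.
rewrite uD orbF => uX.
have [u' u'X /andP [u'u gwu']] := Xext w wDX (negbT gwx) u uX gwu.
by exists u'; rewrite // in_set in_setD u'X gwu'.
Qed.

Lemma minimal_setD (X : {set T}) :
  X \subset D -> X != set0 -> ~~ certified_dominating g (D :\: X).
Proof.
move=> XD /set0Pn [v vX]; have /forallP /(_ (D :\: X)) /implyP := (andP Dmin).2; apply.
rewrite properE subsetDl /=; apply/subsetPn; exists v; first exact: (subsetP XD).
by rewrite in_setD vX.
Qed.

Lemma not_removable (X : {set T}) :
  X \subset D -> X != set0 ->
  (exists2 s, s \in D :\: X & g s x) ->
  {in X, forall v, exists2 u, u \in D :\: X & g v u} ->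
  (forall w, w \in D :\: X -> ~~ g w x -> forall u, u \in X -> g w u ->
     exists2 u', u' \in X & (u' != u) && g w u') ->
  False.
Proof.
by move=> XD Xn0 Xs Xdom Xext; move/negP: (minimal_setD XD Xn0); apply; apply: certified_setD.
Qed.

Lemma exists_nbr v : exists u, g v u.
Proof.
have [w wv] : exists w, w != v.
  have /card_gt1P [a [b [_ _ ab]]] : 1 < #|[set: T]| by rewrite cardsT; apply: leq_trans n3.
  by case: (eqVneq a v) => [av|]; [exists b; rewrite -av eq_sym | exists a].
case/connectP: (gconn v w) => [[|u q] /= vw wE]; first by rewrite wE eqxx in wv.
by exists u; case/andP: vw.
Qed.

Lemma closed_mem (A : {set T}) a b :
  (forall c d, c \in A -> g c d -> d \in A) -> a \in A -> b \in A.
Proof.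
move=> Aclosed aA; case/connectP: (gconn a b) => q + ->.
by elim: q a aA => [|c q IH] a aA //= /andP [gac]; apply: IH; apply: Aclosed gac.
Qed.

(* The [inner] vertices of D are those that are neither leaves nor supports. *)
Definition attached v := (v \in D) && g v x.
Definition detached v := (v \in D) && ~~ g v x.
Definition leaf v := detached v && (#|[set u | g v u]| == 1).
Definition support v := [&& detached v, ~~ leaf v & [exists l, leaf l && g l v]].
Definition bare v := [&& detached v, ~~ leaf v & ~~ [exists l, leaf l && g l v]].
Definition inner v := attached v || bare v.

Lemma detached_nbr_in_D r u : detached r -> g r u -> u \in D.
Proof.
case/andP => rD rx gru; rewrite inD; apply/andP; split; first by apply: contraNneq rx => <-.
by apply: contraNneq rx => uy; rewrite adj_x_adj_y // -uy.
Qed.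

Lemma leafP l : leaf l -> exists p, g l p /\ forall u, g l u -> u = p.
Proof.
case/andP => _ /cards1P [p lN]; exists p; split; first by have := set11 p; rewrite -lN inE.
by move=> u glu; apply/set1P; rewrite -lN inE.
Qed.

Lemma leaf_nbr_uniq l p q : leaf l -> g l p -> g l q -> p = q.
Proof. by case/leafP => z [_ lz] /lz -> /lz ->. Qed.

Lemma exists_attached : exists s, attached s.
Proof. by have [u uD ux] := x_nbr_in_D; exists u; rewrite /attached uD. Qed.

Lemma leaf_detached l : leaf l -> detached l. Proof. by case/andP. Qed.

Lemma attached_not_detached v : attached v -> ~~ detached v.
Proof. by case/andP => _ vx; rewrite /detached vx andbF. Qed.

Lemma attached_not_leaf v : attached v -> ~~ leaf v.
Proof. by move/attached_not_detached; apply: contra; apply: leaf_detached. Qed.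

Lemma leaf_in_D l : leaf l -> l \in D. Proof. by case/andP => /andP []. Qed.

Lemma leaf_nbr_detached l p : leaf l -> g l p -> detached p.
Proof.
move=> ll glp; have pD := detached_nbr_in_D (leaf_detached ll) glp.
rewrite /detached pD /=; apply/negP => gpx.
have pl : p != l by apply: contraTneq glp => ->; rewrite girr.
apply: (@not_removable [set l]).
- by rewrite sub1set leaf_in_D.
- by apply/set0Pn; exists l; rewrite set11.
- by exists p; rewrite // in_setD in_set1 pl.
- by move=> v /set1P ->; exists p; rewrite // in_setD in_set1 pl.
- move=> w _ wx u /set1P -> gwl.
  have wp : w = p by apply: leaf_nbr_uniq ll _ glp; rewrite gsym.
  by rewrite wp gpx in wx.
Qed.

Lemma leaf_nbr_not_leaf l p : leaf l -> g l p -> ~~ leaf p.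
Proof.
move=> ll glp; apply/negP => lp.
have : x \in [set l; p].
  apply: (@closed_mem _ l); last by rewrite !inE eqxx.
  move=> c d; rewrite !inE => /orP [] /eqP -> gd.
    by rewrite (leaf_nbr_uniq ll gd glp) eqxx orbT.
  by rewrite (@leaf_nbr_uniq p d l) ?eqxx // gsym.
move: (leaf_in_D ll) (leaf_in_D lp); rewrite !inD => /andP [lx _] /andP [px _].
by rewrite !inE => /orP [] /eqP xE; [move: lx | move: px]; rewrite xE eqxx.
Qed.

Lemma leaf_nbr_inj l1 l2 p : leaf l1 -> leaf l2 -> g l1 p -> g l2 p -> l1 = l2.
Proof.
move=> ll1 ll2 g1 g2; apply/eqP/negP => /negP l12.
have [s sS] := exists_attached.
have leafX v : v \in [set l1; l2] -> leaf v by case/set2P => ->.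
have pl1 : p != l1 by apply: contraTneq g1 => ->; rewrite girr.
have pl2 : p != l2 by apply: contraTneq g2 => ->; rewrite girr.
have pDX : p \in D :\: [set l1; l2].
  by rewrite in_setD in_set2 negb_or pl1 pl2 (andP (leaf_nbr_detached ll1 g1)).1.
apply: (@not_removable [set l1; l2]).
- by apply/subsetP => v /leafX /leaf_in_D.
- by apply/set0Pn; exists l1; rewrite !inE eqxx.
- exists s; last by case/andP: sS.
  rewrite in_setD (andP sS).1 andbT; apply/negP => /leafX.
  by apply/negP; apply: attached_not_leaf.
- by move=> v /set2P [] ->; exists p.
- move=> w _ _ u /set2P [] -> gwu.
  + have -> : w = p by apply: leaf_nbr_uniq ll1 _ g1; rewrite gsym.
    by exists l2; rewrite ?inE ?eqxx ?orbT // eq_sym l12 gsym.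
  + have -> : w = p by apply: leaf_nbr_uniq ll2 _ g2; rewrite gsym.
    by exists l1; rewrite ?inE ?eqxx // l12 gsym.
Qed.

Lemma inner_not_leaf v : inner v -> ~~ leaf v.
Proof. by case/orP => [/attached_not_leaf // | /and3P []]. Qed.

Lemma inner_in_D v : inner v -> v \in D.
Proof. by case/orP => [/andP [] | /and3P [/andP []]]. Qed.

Lemma support_not_inner v : support v -> ~~ inner v.
Proof.
case/and3P => vR _ vl; rewrite /inner negb_or; apply/andP; split.
  by apply: contraL vR => /attached_not_detached.
by rewrite /bare vl !andbF.
Qed.

Lemma support_of_D v : v \in D -> ~~ inner v -> ~~ leaf v -> support v.
Proof.
move=> vD vW vl; have vR : detached v.
  by rewrite /detached vD /=; apply: contra vW => vx; rewrite /inner /attached vD vx.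
move: vW; rewrite /support /inner /bare vR vl /= negb_or => /andP [_].
by rewrite negbK.
Qed.

Lemma leaf_nbr_support l p : leaf l -> g l p -> support p.
Proof.
move=> ll glp; rewrite /support (leaf_nbr_detached ll glp) (leaf_nbr_not_leaf ll glp) /=.
by apply/existsP; exists l; rewrite ll.
Qed.

Definition outer_nbrs (K : {set T}) p := [set u | [&& g p u, inner u & u \notin K]].

(* The set whose deletion from D contradicts minimality: the inner vertices
   outside K, and the leaves whose support has a single inner neighbour outside
   K (otherwise that support would be left with one external neighbour). *)
Definition removed (K : {set T}) := [set v | (inner v && (v \notin K)) ||
  (leaf v && [exists p, g v p && (#|outer_nbrs K p| == 1)])].

Lemma support_not_removed K l p : leaf l -> g l p -> p \notin removed K.
Proof.
move=> ll glp; rewrite inE negb_or (negbTE (leaf_nbr_not_leaf ll glp)) /= andbT.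
by rewrite (negbTE (support_not_inner (leaf_nbr_support ll glp))).
Qed.

Lemma removed_ext (K : {set T}) :
  (forall k, k \in K -> bare k -> forall u, inner u -> u \notin K -> g k u ->
     exists2 u', [&& inner u', u' \notin K & u' != u] & g k u') ->
  forall w, w \in D :\: removed K -> ~~ g w x -> forall u, u \in removed K -> g w u ->
    exists2 u', u' \in removed K & (u' != u) && g w u'.
Proof.
move=> Kext w; rewrite in_setD => /andP [wX wD] wx u uX gwu.
have [wl | wl] := boolP (leaf w).
  have [p [gwp wp]] := leafP wl.
  by move: uX; rewrite (wp u gwu) (negbTE (support_not_removed K wl gwp)).
have [/existsP [l /andP [ll glw]] | nol] := boolP [exists l, leaf l && g l w].
  move: uX; rewrite inE => /orP [/andP [uW uK] | /andP [ul /existsP [p /andP [gup cp]]]].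
    have uC : u \in outer_nbrs K w by rewrite inE gwu uW uK.
    have [c1 | c1] := boolP (#|outer_nbrs K w| == 1).
      exists l; last by rewrite gsym glw andbT; apply: contraTneq ll => ->; apply: inner_not_leaf.
      by rewrite inE ll /=; apply/orP; right; apply/existsP; exists w; rewrite glw c1.
    have [u' u'C u'u] := card_ne1P _ c1 _ uC.
    by move: u'C; rewrite inE => /and3P [gwu' u'W u'K]; exists u'; rewrite ?inE ?u'W ?u'K ?u'u.
  have pw : p = w by apply: leaf_nbr_uniq ul gup _; rewrite gsym.
  rewrite pw in cp; have [z zE] := cards1P cp.
  have : z \in outer_nbrs K w by rewrite zE set11.
  rewrite inE => /and3P [gwz zW zK]; exists z; first by rewrite inE zW zK.
  by rewrite gwz andbT; apply: contraTneq ul => <-; apply: inner_not_leaf.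
have wU : bare w by rewrite /bare /detached wD wx wl nol.
have wK : w \in K.
  by move: wX; rewrite inE negb_or /inner wU orbT /= negbK => /andP [].
move: uX; rewrite inE => /orP [/andP [uW uK] | /andP [ul /existsP [p /andP [gup _]]]].
  have [u' /and3P [u'W u'K u'u] gu'] := Kext w wK wU u uW uK gwu.
  by exists u'; rewrite ?inE ?u'W ?u'K ?u'u.
by case/negP: nol; apply/existsP; exists u; rewrite ul gsym.
Qed.

Lemma inner_cover_contra s (K : {set T}) :
  attached s -> s \in K -> (forall v, v \in K -> inner v) ->
  (forall w, inner w -> w \notin K -> exists2 u, (u \in K) || support u & g w u) ->
  (forall k, k \in K -> bare k -> forall u, inner u -> u \notin K -> g k u ->
     exists2 u', [&& inner u', u' \notin K & u' != u] & g k u') ->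
  (exists2 w, inner w & w \notin K) -> False.
Proof.
move=> sS sK Kinner Kdom Kext [w0 w0W w0K].
apply: (@not_removable (removed K)); last exact: removed_ext.
- apply/subsetP => v; rewrite inE => /orP [/andP [/inner_in_D //] | /andP [/leaf_in_D //]].
- by apply/set0Pn; exists w0; rewrite inE w0W w0K.
- exists s; last by case/andP: sS.
  by rewrite in_setD (andP sS).1 inE sK andbF (negbTE (attached_not_leaf sS)).
move=> v; rewrite inE => /orP [/andP [vW vK] | /andP [vl /existsP [p /andP [gvp _]]]].
  have [u /orP [uK | uP] gvu] := Kdom v vW vK; exists u => //.
    rewrite in_setD (inner_in_D (Kinner u uK)) inE uK andbF /=.
    by rewrite (negbTE (inner_not_leaf (Kinner u uK))).
  rewrite in_setD inE (negbTE (support_not_inner uP)) /=.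
  by case/and3P: uP => /andP [-> _] /negbTE ->.
exists p; rewrite // in_setD (support_not_removed K vl gvp).
exact: detached_nbr_in_D (leaf_detached vl) gvp.
Qed.

Definition lonely u := bare u && (#|[set v | g u v && inner v]| == 1).

Lemma lonely_support_nbr w : lonely w -> exists2 u, support u & g w u.
Proof.
case/andP => wU /cards1P [c cE]; case/and3P: (wU) => wR wl nol.
have [t gwt] := exists_nbr w.
have wN : #|[set u | g w u]| != 1 by move: wl; rewrite /leaf wR.
have tN : t \in [set u | g w u] by rewrite inE.
have [t' t'N t't] := card_ne1P _ wN t tN.
have [u gwu uW] : exists2 u, g w u & u \notin [set v | g w v && inner v].
  have [tW | tW] := boolP (t \in [set v | g w v && inner v]); last by exists t.
  exists t'; first by move: t'N; rewrite inE.
  apply/negP; rewrite cE inE => /eqP t'c; move: tW; rewrite cE inE => /eqP tc.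
  by move: t't; rewrite t'c tc eqxx.
exists u => //; apply: support_of_D; first exact: detached_nbr_in_D wR gwu.
  by move: uW; rewrite inE gwu.
by apply: contra nol => ul; apply/existsP; exists u; rewrite ul gsym.
Qed.

Lemma maximal_inner_indep s0 : attached s0 -> exists K : {set T}, [/\ s0 \in K,
  forall c, c \in K -> inner c && ~~ lonely c,
  {in K &, forall c d, ~~ g c d} &
  forall w, inner w -> ~~ lonely w -> w \notin K -> exists2 k, k \in K & g w k].
Proof.
move=> s0S; pose good (A : {set T}) :=
  [forall u in A, inner u && ~~ lonely u] && [forall u in A, forall v in A, ~~ g u v].
have good_s0 : good [set s0].
  apply/andP; split; apply/forall_inP => c /set1P ->; last first.
    by apply/forall_inP => d /set1P ->; rewrite girr.
  by rewrite /inner s0S /lonely /bare (negbTE (attached_not_detached s0S)).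
have [K Kmax s0K] := maxset_exists good_s0.
have [/andP [/forall_inP Kgood /forall_inP Kind] Kmaxl] := maxsetP Kmax.
have Kedge : {in K &, forall c d, ~~ g c d} by move=> c d cK /(forall_inP (Kind c cK)).
exists K; split => // [|w wW wU wK]; first exact: (subsetP s0K _ (set11 s0)).
apply/exists_inP; apply: contraNT wK => wKn.
suff good_wK : good (w |: K) by rewrite -(Kmaxl _ good_wK (subsetUr _ _)) setU11.
apply/andP; split; apply/forall_inP => c /setU1P [-> | cK]; rewrite ?wW ?Kgood //.
  apply/forall_inP => d /setU1P [-> | dK]; first by rewrite girr.
  by apply: contra wKn => gwd; apply/exists_inP; exists d.
apply/forall_inP => d /setU1P [-> | dK]; last exact: Kedge.
by apply: contra wKn => gcw; apply/exists_inP; exists c; rewrite // gsym.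
Qed.

Lemma inner_indep a b : inner a -> inner b -> ~~ g a b.
Proof.
have [s0 s0S] := exists_attached.
have [K [s0K Kgood Kedge Kdom]] := maximal_inner_indep s0S.
have Kinner c : c \in K -> inner c by case/Kgood/andP.
suff innerK w : inner w -> w \in K by move=> /innerK aK /innerK; apply: Kedge.
move=> wW; apply/negPn/negP => wK; apply: (inner_cover_contra s0S s0K Kinner).
- move=> v vW vK; have [vU | vU] := boolP (lonely v).
    by have [u uP gvu] := lonely_support_nbr vU; exists u; rewrite ?uP ?orbT.
  by have [k kK gvk] := Kdom v vW vU vK; exists k; rewrite ?kK.
- move=> k kK kU u uW uK gku.
  have kN : #|[set v | g k v && inner v]| != 1.
    by have /andP [_] := Kgood k kK; rewrite /lonely kU.
  have uN : u \in [set v | g k v && inner v] by rewrite inE gku uW.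
  have [u' u'N u'u] := card_ne1P _ kN u uN.
  move: u'N; rewrite inE => /andP [gku' u'W]; exists u' => //.
  rewrite u'W u'u andbT; apply: contraTN gku' => u'K; exact: Kedge.
- by exists w.
Qed.

Lemma no_bare u : ~~ bare u.
Proof.
apply/negP => uU; have [s0 s0S] := exists_attached.
have uW : inner u by rewrite /inner uU orbT.
have uR : detached u by case/and3P: uU.
apply: (@inner_cover_contra s0 [set v | inner v && (v != u)] s0S).
- rewrite inE /inner s0S /=; apply: contraTneq uR => <-; exact: attached_not_detached.
- by move=> v /setIdP [].
- move=> w wW; rewrite inE wW /= negbK => /eqP ->.
  have [t gut] := exists_nbr u; exists t; last by [].
  apply/orP; right; apply: support_of_D; first exact: detached_nbr_in_D uR gut.
    by apply: contraL gut => tW; apply: inner_indep.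
  case/and3P: uU => _ _; apply: contra => tl.
  by apply/existsP; exists t; rewrite tl gsym.
- move=> k _ kU v vW _ gkv; have kW : inner k by rewrite /inner kU orbT.
  by move: (inner_indep kW vW); rewrite gkv.
- by exists u; rewrite // inE uW eqxx.
Qed.

Lemma attached_support_nadj s1 s2 t :
  attached s1 -> attached s2 -> s1 != s2 -> support t -> ~~ g s2 t.
Proof.
move=> s1S s2S s12 tP; apply/negP => gs2t.
have s2W : inner s2 by rewrite /inner s2S.
apply: (@inner_cover_contra s1 [set v | inner v && (v != s2)] s1S).
- by rewrite inE /inner s1S.
- by move=> v /setIdP [].
- by move=> w wW; rewrite inE wW /= negbK => /eqP ->; exists t; rewrite ?tP ?orbT.
- by move=> k _ kU; move: (no_bare k); rewrite kU.
- by exists s2; rewrite // inE s2W eqxx.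
Qed.

Lemma attached_unique s1 s2 :
  (exists r, detached r) -> attached s1 -> attached s2 -> s1 = s2.
Proof.
move=> [r rR] s1S s2S; apply/eqP/negP => /negP s12.
have noP z t : attached z -> support t -> ~~ g z t.
  move=> zS tP; have [-> | zs1] := eqVneq z s1.
    by apply: attached_support_nadj s2S s1S _ tP; rewrite eq_sym.
  by apply: attached_support_nadj s1S zS _ tP; rewrite eq_sym.
suff : x \in [set v | detached v] by rewrite inE /detached inD eqxx.
apply: (@closed_mem _ r); last by rewrite inE.
move=> c d; rewrite !inE => cR gcd; have dD := detached_nbr_in_D cR gcd.
rewrite /detached dD /=; apply/negP => gdx; have dS : attached d by rewrite /attached dD.
have [cl | cl] := boolP (leaf c).
  by move: (attached_not_detached dS); rewrite (leaf_nbr_detached cl gcd).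
have cP : support c.
  apply: support_of_D (andP cR).1 _ cl; rewrite /inner negb_or no_bare andbT.
  by apply: contraL cR => /attached_not_detached.
by move: (noP d c dS cP); rewrite gsym gcd.
Qed.

Lemma D_indep : (forall v, v \in D -> g v x) -> {in D &, forall u v, ~~ g u v}.
Proof.
move=> Dx u v uD vD; apply/negP => guv.
have vu : v != u by apply: contraTneq guv => ->; rewrite girr.
apply: (@not_removable [set u]).
- by rewrite sub1set.
- by apply/set0Pn; exists u; rewrite set11.
- by exists v; rewrite ?Dx // in_setD in_set1 vu.
- by move=> w /set1P ->; exists v; rewrite // in_setD in_set1 vu.
- by move=> w; rewrite in_setD => /andP [_ /Dx ->].
Qed.

Lemma card_D : #|D| = #|T| - 2.
Proof. by move: (cardsC [set x; y]); rewrite cards2 xy; lia. Qed.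

Lemma join_iso (R : rel (bool + 'I_(#|T| - 2))) :
  (forall v, v \in D -> g v x) -> join_shape (g x y) R -> isomorphic g R.
Proof.
move=> Dx [Rll Rlr Rrl Rrr].
pose ev i : T := enum_val (cast_ord (esym card_D) i).
have evD i : ev i \in D by apply: enum_valP.
have xyD v : v \in D -> g x v && g y v.
  by move=> vD; rewrite !(gsym _ v) -adj_x_adj_y // Dx.
pose e (a : bool + 'I_(#|T| - 2)) := match a with inl b => if b then x else y | inr i => ev i end.
apply: (@isomorphic_of_onto _ _ _ _ e).
- move=> [[]|i] [[]|j] //= eab.
  + by have := xy; rewrite eab eqxx.
  + by move: (evD j); rewrite -eab inD eqxx.
  + by have := xy; rewrite eab eqxx.
  + by move: (evD j); rewrite -eab inD eqxx andbF.
  + by move: (evD i); rewrite eab inD eqxx.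
  + by move: (evD i); rewrite eab inD eqxx andbF.
  + by rewrite (cast_ord_inj (enum_val_inj eab)).
- move=> v; apply/codomP; have [-> | vx] := eqVneq v x; first by exists (inl true).
  have [-> | vy] := eqVneq v y; first by exists (inl false).
  have vD : v \in D by rewrite inD vx vy.
  exists (inr (cast_ord card_D (enum_rank_in vD v))).
  by rewrite /= /ev cast_ordK enum_rankK_in.
- move=> [[]|i] [[]|j] /=; rewrite ?Rll ?Rlr ?Rrl ?Rrr ?girr ?andbF ?andbT //.
  + by case/andP: (xyD _ (evD j)).
  + by case/andP: (xyD _ (evD j)).
  + by rewrite gsym; case/andP: (xyD _ (evD i)).
  + by rewrite gsym; case/andP: (xyD _ (evD i)).
  + by apply/negbTE/D_indep.
Qed.

Section DiademCase.
Hypothesis det : exists r, detached r.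
Variable s0 : T.
Hypothesis s0S : attached s0.

Lemma attachedE v : attached v = (v == s0).
Proof. by apply/idP/eqP => [vS | ->]; [apply: attached_unique | ]. Qed.

Definition core := [set v in D | ~~ leaf v].
Definition stem l := odflt l [pick p | g l p].
(* [y] plays the role of the pendant vertex of [s0] in the corona. *)
Definition pendant a := if a == s0 then y else odflt a [pick l | leaf l && g l a].

Lemma s0_core : s0 \in core.
Proof. by rewrite inE (andP s0S).1 attached_not_leaf. Qed.

Lemma core_in_D a : a \in core -> a \in D. Proof. by case/setIdP. Qed.

Lemma leaf_notin_core l : leaf l -> l \notin core. Proof. by move=> ll; rewrite inE ll andbF. Qed.

Lemma stemP l : leaf l -> g l (stem l).
Proof.
move=> ll; rewrite /stem; case: pickP => [p gp // | none].
by have [p [glp _]] := leafP ll; move: (none p); rewrite glp.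
Qed.

Lemma stem_core l : leaf l -> stem l \in core.
Proof.
move=> ll; have glp := stemP ll.
by rewrite inE (leaf_nbr_not_leaf ll glp) andbT (andP (leaf_nbr_detached ll glp)).1.
Qed.

Lemma stem_neq_s0 l : leaf l -> stem l != s0.
Proof.
move=> ll; rewrite -attachedE; apply: contraTN (leaf_nbr_detached ll (stemP ll)).
exact: attached_not_detached.
Qed.

Lemma pendantP a : a \in core -> a != s0 -> leaf (pendant a) && g (pendant a) a.
Proof.
move=> aC as0; rewrite /pendant (negbTE as0); case: pickP => [l -> // | none] /=.
have : support a.
  apply: support_of_D (core_in_D aC) _ _; last by case/setIdP: aC.
  rewrite /inner negb_or no_bare andbT attachedE //.
by case/and3P => _ _ /existsP [l /andP [ll gla]]; move: (none l); rewrite ll gla.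
Qed.

Lemma stem_pendant a : a \in core -> a != s0 -> stem (pendant a) = a.
Proof.
move=> aC as0; case/andP: (pendantP aC as0) => ll gla.
exact: leaf_nbr_uniq ll (stemP ll) gla.
Qed.

Lemma pendant_stem l : leaf l -> pendant (stem l) = l.
Proof.
move=> ll; have /andP [l'l gl'] := pendantP (stem_core ll) (stem_neq_s0 ll).
exact: leaf_nbr_inj l'l ll gl' (stemP ll).
Qed.

Lemma pendant_s0 : pendant s0 = y. Proof. by rewrite /pendant eqxx. Qed.

Lemma pendant_leaf a : a \in core -> a != s0 -> leaf (pendant a).
Proof. by move=> aC as0; case/andP: (pendantP aC as0). Qed.

Lemma leaf_adj_y l : leaf l -> g l y = false.
Proof.
by move=> ll; rewrite -adj_x_adj_y ?leaf_in_D //; apply/negbTE; case/andP: (leaf_detached ll).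
Qed.

Lemma pendant_notin_core a : a \in core -> pendant a \notin core.
Proof.
move=> aC; have [-> | as0] := eqVneq a s0; last exact/leaf_notin_core/pendant_leaf.
by rewrite pendant_s0; apply: contraTN isT => /core_in_D; rewrite inD eqxx andbF.
Qed.

Lemma pendant_neq_x a : a \in core -> pendant a != x.
Proof.
move=> aC; have [-> | as0] := eqVneq a s0; first by rewrite pendant_s0 eq_sym.
by have := leaf_in_D (pendant_leaf aC as0); rewrite inD => /andP [].
Qed.

Lemma pendant_inj : {in core &, injective pendant}.
Proof.
have y_not_leaf l : leaf l -> y != l.
  by move=> ll; have := leaf_in_D ll; rewrite inD eq_sym => /andP [_]; rewrite eq_sym.
move=> a b aC bC; have [-> | as0] := eqVneq a s0; have [-> | bs0] := eqVneq b s0 => //.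
- by rewrite pendant_s0 => ypb; move: (y_not_leaf _ (pendant_leaf bC bs0)); rewrite ypb eqxx.
- by rewrite pendant_s0 => pay; move: (y_not_leaf _ (pendant_leaf aC as0)); rewrite pay eqxx.
by move=> pab; rewrite -(stem_pendant aC as0) pab stem_pendant.
Qed.

Lemma vertex_cases v : [\/ v = x, v = y, v \in core | leaf v].
Proof.
have [-> | vx] := eqVneq v x; first by constructor 1.
have [-> | vy] := eqVneq v y; first by constructor 2.
have [vl | vl] := boolP (leaf v); first by constructor 4.
by constructor 3; rewrite inE inD vx vy.
Qed.

Lemma adj_x_core a : a \in core -> g x a = (a == s0).
Proof. by move=> aC; rewrite gsym -attachedE /attached core_in_D. Qed.

Lemma adj_x_pendant a : a \in core -> g x (pendant a) = g x y && (a == s0).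
Proof.
move=> aC; have [-> | as0] := eqVneq a s0; first by rewrite pendant_s0 andbT.
by rewrite andbF gsym; apply/negbTE; case/andP: (leaf_detached (pendant_leaf aC as0)).
Qed.

Lemma adj_core_pendant a b : a \in core -> b \in core -> g a (pendant b) = (a == b).
Proof.
move=> aC bC; have [-> | bs0] := eqVneq b s0.
  by rewrite pendant_s0 -adj_x_adj_y ?core_in_D // gsym adj_x_core.
have /andP [ll glb] := pendantP bC bs0.
apply/idP/eqP => [gal | ->]; last by rewrite gsym.
by apply: leaf_nbr_uniq ll _ glb; rewrite gsym.
Qed.

Lemma adj_pendant_pendant a b : a \in core -> b \in core -> g (pendant a) (pendant b) = false.
Proof.
move=> aC bC; have [-> | as0] := eqVneq a s0; have [-> | bs0] := eqVneq b s0.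
- by rewrite pendant_s0 girr.
- by rewrite pendant_s0 gsym leaf_adj_y // pendant_leaf.
- by rewrite pendant_s0 leaf_adj_y // pendant_leaf.
apply/negP => gab; move: (leaf_nbr_not_leaf (pendant_leaf aC as0) gab).
by rewrite pendant_leaf.
Qed.

Lemma diadem_iso (R : rel (option ('I_#|core| + 'I_#|core|))) :
  diadem_shape (fun i j => g (enum_val i) (enum_val j)) (enum_rank_in s0_core s0) (g x y) R ->
  isomorphic g R.
Proof.
case=> Rcor RNN RNl RlN RNr RrN.
set s := enum_rank_in s0_core s0.
have evC (i : 'I_#|core|) : enum_val i \in core by apply: enum_valP.
have ev_s : enum_val s = s0 by apply: enum_rankK_in s0_core.
have ev_eq (i j : 'I_#|core|) : (enum_val i == enum_val j) = (i == j).
  exact: (inj_eq enum_val_inj).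
have ev_s0 i : (enum_val i == s0) = (i == s) by rewrite -ev_s ev_eq.
pose e (a : option ('I_#|core| + 'I_#|core|)) : T :=
  match a with None => x | Some (inl i) => enum_val i | Some (inr i) => pendant (enum_val i) end.
apply: (@isomorphic_of_onto _ _ _ _ e).
- have x_notin_core a : a \in core -> a != x by move=> /core_in_D; rewrite inD => /andP [].
  move=> [[i|i]|] [[j|j]|] //= eab.
  + by rewrite (enum_val_inj eab).
  + by move: (evC i); rewrite eab (negbTE (pendant_notin_core (evC j))).
  + by move: (x_notin_core _ (evC i)); rewrite eab eqxx.
  + by move: (evC j); rewrite -eab (negbTE (pendant_notin_core (evC i))).
  + by rewrite (enum_val_inj (pendant_inj (evC i) (evC j) eab)).
  + by move: (pendant_neq_x (evC i)); rewrite eab eqxx.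
  + by move: (x_notin_core _ (evC j)); rewrite -eab eqxx.
  + by move: (pendant_neq_x (evC j)); rewrite -eab eqxx.
- move=> v; apply/codomP; case: (vertex_cases v) => [-> | -> | vC | vl].
  + by exists None.
  + by exists (Some (inr s)); rewrite /= ev_s pendant_s0.
  + by exists (Some (inl (enum_rank_in s0_core v))); rewrite /= enum_rankK_in.
  + exists (Some (inr (enum_rank_in s0_core (stem v)))).
    by rewrite /= enum_rankK_in ?stem_core // pendant_stem.
move=> [[i|i]|] [[j|j]|] /=; rewrite ?Rcor ?RNl ?RlN ?RNr ?RrN ?RNN //=.
- by rewrite adj_core_pendant // ev_eq.
- by rewrite gsym adj_x_core // ev_s0.
- by rewrite gsym adj_core_pendant // ev_eq eq_sym.
- by rewrite adj_pendant_pendant.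
- by rewrite gsym adj_x_pendant // ev_s0.
- by rewrite adj_x_core // ev_s0.
- by rewrite adj_x_pendant // ev_s0.
Qed.

Lemma diadem_classification : is_simple_diadem g \/ is_diadem g.
Proof.
pose h (i j : 'I_#|core|) := g (enum_val i) (enum_val j).
have hsimple : simple_graph h by split => [i j | i]; [exact: gsym | exact: girr].
case gxy: (g x y); [right | left]; exists #|core|, h, (enum_rank_in s0_core s0).
all: split => //; apply: diadem_iso; rewrite gxy.
- exact: diadem_diadem_shape.
- exact: simple_diadem_shape.
Qed.

End DiademCase.

Lemma compl_pair_classification :
  [\/ is_simple_diadem g, is_diadem g,
      isomorphic g (@K2_join_barK (#|T| - 2)) | isomorphic g (@barK2_join_barK (#|T| - 2))].
Proof.
have [s0 s0S] := exists_attached.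
have [r rR | no_det] := pickP detached.
  by case: (diadem_classification (ex_intro _ r rR) s0S); [constructor 1 | constructor 2].
have Dx v : v \in D -> g v x by move=> vD; move: (no_det v); rewrite /detached vD => /negbFE.
case gxy: (g x y); [constructor 3 | constructor 4]; apply: join_iso Dx _; rewrite gxy.
- exact: K2_join_shape.
- exact: barK2_join_shape.
Qed.

End ComplementOfPair.

Theorem theorem3p3 (T : finType) (g : rel T) :
  simple_graph g -> connected_graph g -> 3 <= #|T| ->
  (Gamma_cer g = #|T| - 2 <->
     [\/ is_simple_diadem g, is_diadem g,
         isomorphic g (@K2_join_barK (#|T| - 2))
       | isomorphic g (@barK2_join_barK (#|T| - 2))]).
Proof.
move=> [gsym girr] gconn n3; rewrite (Gamma_cer_subn2P gsym n3); split.
  by case=> x [y [xy Dmin]]; apply: (compl_pair_classification gsym girr gconn n3 xy Dmin).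
have m_gt0 : 0 < #|T| - 2 by rewrite subn_gt0.
case=> [[k [h [s [_ iso]]]] | [k [h [s [_ iso]]]] | iso | iso].
- exact: mcd_compl_pair_iso iso (diadem_mcd_compl_pair (simple_diadem_shape h s)).
- exact: mcd_compl_pair_iso iso (diadem_mcd_compl_pair (diadem_diadem_shape h s)).
- exact: mcd_compl_pair_iso iso (join_mcd_compl_pair m_gt0 (K2_join_shape _)).
- exact: mcd_compl_pair_iso iso (join_mcd_compl_pair m_gt0 (barK2_join_shape _)).
Qed.
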